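(* Let $H$ be a payoff-maximization game, and let $\Phi$ be an exact potential function for $H$. Suppose there are $A,B\ge1$ with $A\,\Phi(\vec s)\ge u(\vec s)\ge\frac1B\Phi(\vec s)$ for all outcomes $\vec s$. Suppose also that $H$ is $(\lambda,\mu)$-nice with $\lambda>0$ and $\mu\ge0$, and let $\rho=\frac{\lambda}{1+\mu}$. Then for every $\epsilon>0$, from any initial outcome, the BR dynamic reaches an outcome $\vec s^t$ with $u(\vec s^t)\ge\frac{\rho(1-\epsilon)}{AB}u(\vec s^* )$ within $$O\!\left(\frac{n}{A(1+\mu)}\log\frac1\epsilon\right)$$ steps. Moreover, every outcome reached afterwards by best-response moves also satisfies this approximation guarantee.
   Context: A payoff-maximization game has players $N=\{1,\dots,n\}$, strategy sets $S_i$ and payoffs $u_i:\prod_j S_j\to\mathbb R_{\ge0}$. The social welfare is $u(\vec s)=\sum_iu_i(\vec s)$, and $\vec s^*$ maximizes $u$. $\Phi$ is an exact potential if $\Phi(s_i',\vec s_{-i})-\Phi(\vec s)=u_i(s_i',\vec s_{-i})-u_i(\vec s)$ for all $i$, $s_i'$ and $\vec s$. The game is $(\lambda,\mu)$-nice if for every outcome $\vec s$ there exists an outcome $\vec s'$ with $$\sum_{i\in N}u_i(s_i',\vec s_{-i})\ge\lambda u(\vec s^* )-\mu u(\vec s).$$ For an outcome $\vec s$, let $s_i^b$ be a best response of $i$ to $\vec s_{-i}$. Set $\Delta_i(\vec s)=u_i(s_i^b,\vec s_{-i})-u_i(\vec s)$. The BR dynamic is the process in which, at each step, a player $i$ maximizing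 $\Delta_i(\vec s)$ switches to a best response; each such move is one step. *)

From mathcomp Require Import all_boot.
From Stdlib Require Import Reals Relations.
Set Implicit Arguments.
Unset Strict Implicit.
Unset Printing Implicit Defensive.

Definition profile (n : nat) (S : 'I_n -> Type) := forall i : 'I_n, S i.

(* (x, s_{-i}) : player i switches to x, the others keep s. *)
Definition upd (n : nat) (S : 'I_n -> Type) (s : profile S) (i : 'I_n) (x : S i)
  : profile S :=
  fun j => match i =P j with
           | ReflectT e => eq_rect i S x j e
           | ReflectF _ => s j
           end.
Arguments upd {n S} s i x _.

Definition payoffs (n : nat) (S : 'I_n -> Type) := forall i : 'I_n, profile S -> R.

Definition welfare (n : nat) (S : 'I_n -> Type) (u : payoffs S) (s : profile S) : R :=
  \big[Rplus/0%R]_(i < n) u i s.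

Definition welfare_max (n : nat) (S : 'I_n -> Type) (u : payoffs S) (sopt : profile S) :=
  forall s : profile S, (welfare u s <= welfare u sopt)%R.

Definition exact_potential (n : nat) (S : 'I_n -> Type) (u : payoffs S)
  (Phi : profile S -> R) :=
  forall (i : 'I_n) (x : S i) (s : profile S),
    (Phi (upd s i x) - Phi s = u i (upd s i x) - u i s)%R.

Definition nice (n : nat) (S : 'I_n -> Type) (u : payoffs S) (sopt : profile S)
  (lambda mu : R) :=
  forall s : profile S, exists s' : profile S,
    (\big[Rplus/0%R]_(i < n) u i (upd s i (s' i))
       >= lambda * welfare u sopt - mu * welfare u s)%R.

Definition best_response (n : nat) (S : 'I_n -> Type) (u : payoffs S)
  (s : profile S) (i : 'I_n) (b : S i) :=
  forall x : S i, (u i (upd s i x) <= u i (upd s i b))%R.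
Arguments best_response {n S} u s i b.

Definition br_move (n : nat) (S : 'I_n -> Type) (u : payoffs S)
  (s s' : profile S) :=
  exists (i : 'I_n) (b : S i), best_response u s i b /\ s' = upd s i b.

(* One step of the BR dynamic: a player i maximizing
   Delta_i(s) = u_i(s_i^b, s_{-i}) - u_i(s) switches to a best response. *)
Definition br_dyn_step (n : nat) (S : 'I_n -> Type) (u : payoffs S)
  (s s' : profile S) :=
  exists (i : 'I_n) (b : S i),
    best_response u s i b /\
    (forall (j : 'I_n) (bj : S j), best_response u s j bj ->
       (u j (upd s j bj) - u j s <= u i (upd s i b) - u i s)%R) /\
    s' = upd s i b.

Definition br_dynamic (n : nat) (S : 'I_n -> Type) (u : payoffs S)
  (traj : nat -> profile S) :=
  forall t : nat, br_dyn_step u (traj t) (traj t.+1).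

Definition br_reachable (n : nat) (S : 'I_n -> Type) (u : payoffs S) :=
  clos_refl_trans (profile S) (@br_move n S u).

From mathcomp Require Import all_boot.
From Stdlib Require Import Reals Lra ZArith FunctionalExtensionality.
Set Implicit Arguments.
Unset Strict Implicit.

(* Best-response moves never decrease the exact potential Phi.  At a
   BR-dynamic step the mover has the largest improvement Delta, so summing the
   niceness inequality over all n players gives
       n * (Phi(s') - Phi(s)) >= lambda * OPT - (1 + mu) * u(s)
                             >= lambda * OPT - (1 + mu) * A * Phi(s).
   Hence the gap P - Phi(s^t) to P := lambda * OPT / ((1 + mu) A) shrinks by a
   factor 1 - c with c = (1 + mu) A / n, so it is at most exp(-c t) * P.
   After t >= ln(1/eps) / c steps the potential is at least (1 - eps) P, and
   it stays so along further best-response moves; u >= Phi / B then gives the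
   welfare guarantee. *)

Lemma sum_le_shift (n : nat) (f g : 'I_n -> R) (d : R) :
  (forall j, f j <= g j + d)%R ->
  (\big[Rplus/0%R]_(j < n) f j <= \big[Rplus/0%R]_(j < n) g j + INR n * d)%R.
Proof.
elim: n f g => [|n IH] f g Hfg; first by rewrite !big_ord0 /=; lra.
rewrite S_INR !big_ord_recl /=.
have := IH (fun j => f (lift ord0 j)) (fun j => g (lift ord0 j)) (fun j => Hfg _).
set F := \big[Rplus/0%R]_(j < n) f (lift ord0 j).
set G := \big[Rplus/0%R]_(j < n) g (lift ord0 j).
have := Hfg ord0; lra.
Qed.

Lemma sum_ge0 (n : nat) (f : 'I_n -> R) :
  (forall j, 0 <= f j)%R -> (0 <= \big[Rplus/0%R]_(j < n) f j)%R.
Proof. by move=> Hf; apply: big_ind => [|x y Hx Hy|j _]; [lra | lra | exact: Hf]. Qed.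

Section BestResponse.

Variables (n : nat) (S : 'I_n -> Type) (u : payoffs S) (Phi : profile S -> R).
Hypothesis potential : exact_potential u Phi.

Lemma upd_same (s : profile S) (i : 'I_n) : upd s i (s i) = s.
Proof.
apply: functional_extensionality_dep => j; rewrite /upd.
by case: (i =P j) => [e|//]; case: j / e.
Qed.

(* A best response is at least as good as staying put, so Phi does not drop. *)
Lemma br_Phi_mono (s : profile S) (i : 'I_n) (b : S i) :
  best_response u s i b -> (Phi s <= Phi (upd s i b))%R.
Proof. by move=> Hb; have := potential b s; have := Hb (s i); rewrite upd_same; lra. Qed.

Lemma reachable_Phi_mono (s s' : profile S) :
  br_reachable u s s' -> (Phi s <= Phi s')%R.
Proof.
by elim=> [x y [i [b [Hb ->]]]|x|x y z _ Hxy _ Hyz]; [exact: br_Phi_mono | lra | lra].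
Qed.

Hypothesis br_exists : forall (s : profile S) (i : 'I_n), exists b : S i, best_response u s i b.

(* Progress of one BR-dynamic step: summing the niceness inequality and
   bounding every player's deviation gain by the maximal gain Delta_i. *)
Lemma br_step_progress (sopt : profile S) (lambda mu : R) (s s' : profile S) :
  nice u sopt lambda mu -> br_dyn_step u s s' ->
  (INR n * (Phi s' - Phi s) >= lambda * welfare u sopt - (1 + mu) * welfare u s)%R.
Proof.
move=> Hnice [i [b [_ [Hmax ->]]]]; have [s2 Hs2] := Hnice s.
have gain_le_max : forall j, (u j (upd s j (s2 j)) <= u j s + (u i (upd s i b) - u i s))%R.
  move=> j; have [bj Hbj] := br_exists s j.
  by have := Hmax j bj Hbj; have := Hbj (s2 j); lra.
have := sum_le_shift gain_le_max; rewrite (potential b s) /welfare in Hs2 *; lra.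
Qed.

End BestResponse.

Lemma gap_contraction (N a K p p' : R) :
  (0 < N)%R -> (0 < a)%R -> (N * (p' - p) >= K - a * p)%R ->
  (K / a - p' <= (1 - a / N) * (K / a - p))%R.
Proof.
move=> HN Ha Hprog; apply: (Rmult_le_reg_l N) => //.
have -> : (N * ((1 - a / N) * (K / a - p)) = N * (K / a - p) - (K - a * p))%R
  by field; lra.
have -> : (N * (K / a - p') = N * (K / a - p) - N * (p' - p))%R by ring.
lra.
Qed.

Lemma gap_decay (p : nat -> R) (P c : R) :
  (0 <= P)%R -> (0 <= p 0%nat)%R -> (forall t, p t <= p t.+1)%R ->
  (forall t, P - p t.+1 <= (1 - c) * (P - p t))%R ->
  forall t, (P - p t <= exp (- (c * INR t)) * P)%R.
Proof.
move=> HP Hp0 Hmono Hcontr; elim=> [|t IH]; first by rewrite /= Rmult_0_r Ropp_0 exp_0; lra.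
have -> : (exp (- (c * INR t.+1)) = exp (- c) * exp (- (c * INR t)))%R
  by rewrite -exp_plus S_INR; f_equal; ring.
have Hexp_pos := exp_pos (- c); have Hexp_t := exp_pos (- (c * INR t)).
case: (Rle_dec (P - p t) 0) => Hgap.
  have : (0 <= exp (- c) * exp (- (c * INR t)) * P)%R by apply: Rmult_le_pos; nra.
  by have := Hmono t; lra.
have : ((1 - c) * (P - p t) <= exp (- c) * (P - p t))%R
  by apply: Rmult_le_compat_r; have := exp_ineq1_le (- c); lra.
have : (exp (- c) * (P - p t) <= exp (- c) * (exp (- (c * INR t)) * P))%R
  by apply: Rmult_le_compat_l; lra.
by have := Hcontr t; lra.
Qed.

Lemma exp_opp_le (x eps : R) :
  (0 < eps)%R -> (ln (/ eps) <= x)%R -> (exp (- x) <= eps)%R.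
Proof.
move=> Heps; rewrite ln_Rinv // => Hx; apply: Rnot_lt_le => Hlt.
by rewrite -{1}(exp_ln eps Heps) in Hlt; have := exp_lt_inv _ _ Hlt; lra.
Qed.

Lemma nat_ceil (x : R) : (0 < x)%R -> exists t : nat, (x <= INR t <= x + 1)%R.
Proof.
move=> Hx; have [Hup Hup1] := archimed x.
have Hup0 : (0 <= up x)%Z by apply: le_IZR; lra.
by exists (Z.to_nat (up x)); rewrite INR_IZR_INZ Z2Nat.id //; lra.
Qed.

Section Convergence.

Variables (n : nat) (S : 'I_n -> Type) (u : payoffs S) (Phi : profile S -> R)
  (sopt : profile S) (A B lambda mu : R) (traj : nat -> profile S).
Hypotheses (n_pos : (0 < INR n)%R) (u_ge0 : forall i s, (0 <= u i s)%R)
  (br_exists : forall (s : profile S) (i : 'I_n), exists b : S i, best_response u s i b)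
  (potential : exact_potential u Phi) (A_ge1 : (1 <= A)%R) (B_ge1 : (1 <= B)%R)
  (Phi_sandwich : forall s, (A * Phi s >= welfare u s)%R /\ (welfare u s >= / B * Phi s)%R)
  (niceness : nice u sopt lambda mu) (lambda_pos : (0 < lambda)%R) (mu_ge0 : (0 <= mu)%R)
  (dynamic : br_dynamic u traj).

Definition target_potential : R := (lambda * welfare u sopt / ((1 + mu) * A))%R.
Definition contraction_rate : R := ((1 + mu) * A / INR n)%R.

Lemma welfare_ge0 (s : profile S) : (0 <= welfare u s)%R.
Proof. by apply: sum_ge0. Qed.

Lemma Phi_ge0 (s : profile S) : (0 <= Phi s)%R.
Proof. by have [HA _] := Phi_sandwich s; have := welfare_ge0 s; nra. Qed.

Lemma target_potential_ge0 : (0 <= target_potential)%R.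
Proof.
have Ha : (0 < (1 + mu) * A)%R by nra.
rewrite /target_potential /Rdiv; apply: Rmult_le_pos; last by left; apply: Rinv_0_lt_compat.
by have := welfare_ge0 sopt; nra.
Qed.

Lemma potential_gap_decay (t : nat) :
  (target_potential - Phi (traj t) <= exp (- (contraction_rate * INR t)) * target_potential)%R.
Proof.
have Ha : (0 < (1 + mu) * A)%R by nra.
apply: (@gap_decay (fun k => Phi (traj k))) => [||k|k]; last first.
- rewrite /target_potential /contraction_rate; apply: gap_contraction => //.
  have := br_step_progress potential br_exists niceness (dynamic k).
  have [HA _] := Phi_sandwich (traj k).
  have : ((1 + mu) * welfare u (traj k) <= (1 + mu) * (A * Phi (traj k)))%R
    by apply: Rmult_le_compat_l; lra.
  lra.
- by have [i [b [Hb [_ ->]]]] := dynamic k; apply: br_Phi_mono.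
- exact: Phi_ge0.
- exact: target_potential_ge0.
Qed.

Lemma guarantee_after (eps : R) (t : nat) : (0 < eps)%R ->
  (ln (/ eps) <= contraction_rate * INR t)%R ->
  forall s : profile S, br_reachable u (traj t) s ->
    (welfare u s >= (lambda / (1 + mu)) * (1 - eps) / (A * B) * welfare u sopt)%R.
Proof.
move=> Heps Ht s Hs.
have Hexp := exp_opp_le Heps Ht.
have HP := target_potential_ge0.
have Hgap : (target_potential - Phi (traj t) <= eps * target_potential)%R.
  by have := potential_gap_decay t; have := Rmult_le_compat_r _ _ _ HP Hexp; lra.
have Hreach := reachable_Phi_mono potential Hs.
have -> : ((lambda / (1 + mu)) * (1 - eps) / (A * B) * welfare u sopt
           = / B * ((1 - eps) * target_potential))%R
  by rewrite /target_potential; field; lra.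
have [_ HB] := Phi_sandwich s.
have : (/ B * ((1 - eps) * target_potential) <= / B * Phi s)%R.
  by apply: Rmult_le_compat_l; [left; apply: Rinv_0_lt_compat; lra | lra].
lra.
Qed.

End Convergence.

Theorem theorem3 :
  exists C : R, (0 < C)%R /\
  forall (n : nat) (S : 'I_n -> Type) (u : payoffs S) (Phi : profile S -> R)
         (sopt : profile S) (A B lambda mu : R),
    (forall (i : 'I_n) (s : profile S), (0 <= u i s)%R) ->
    (forall (s : profile S) (i : 'I_n), exists b : S i, best_response u s i b) ->
    welfare_max u sopt ->
    exact_potential u Phi ->
    (1 <= A)%R -> (1 <= B)%R ->
    (forall s : profile S,
        (A * Phi s >= welfare u s)%R /\ (welfare u s >= / B * Phi s)%R) ->
    nice u sopt lambda mu -> (0 < lambda)%R -> (0 <= mu)%R ->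
    forall eps : R, (0 < eps)%R ->
    forall traj : nat -> profile S, br_dynamic u traj ->
    exists t : nat,
      (t = 0%nat \/
       (INR t < C * (INR n / (A * (1 + mu))) * ln (/ eps) + 1)%R) /\
      forall s : profile S, br_reachable u (traj t) s ->
        (welfare u s >= (lambda / (1 + mu)) * (1 - eps) / (A * B) * welfare u sopt)%R.
Proof.
exists 2%R; split; first lra.
move=> n S u Phi sopt A B lambda mu Hu Hbr _ Hpot HA HB Hsand Hnice Hl Hm eps Heps traj Hdyn.
case: n => [|n'] in S u Phi sopt Hu Hbr Hpot Hsand Hnice traj Hdyn *.
  by exists 0%nat; split; [left | move=> s _; rewrite /welfare !big_ord0; lra].
have Hn : (0 < INR n'.+1)%R by apply: lt_0_INR; apply/ltP.
have guarantee := guarantee_after Hn Hu Hbr Hpot HA HB Hsand Hnice Hl Hm Hdyn Heps.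
(* The number of steps needed is x = ln(1/eps) / contraction_rate. *)
set x := (INR n'.+1 / (A * (1 + mu)) * ln (/ eps))%R.
have Hrate : (contraction_rate n'.+1 A mu * x = ln (/ eps))%R.
  by rewrite /contraction_rate /x; field; lra.
have Hrate_pos : (0 < contraction_rate n'.+1 A mu)%R.
  by rewrite /contraction_rate /Rdiv; apply: Rmult_lt_0_compat;
     [nra | apply: Rinv_0_lt_compat].
case: (Rle_dec x 0) => Hx.
  by exists 0%nat; split; [left | apply: guarantee; rewrite /= Rmult_0_r; nra].
have [t [Hxt Htx]] := nat_ceil (Rnot_le_lt _ _ Hx).
by exists t; split; [right; rewrite Rmult_assoc -/x; lra | apply: guarantee; rewrite -Hrate; nra].
Qed.
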